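(* Let $\mathbf a=(a_1,\ldots,a_n)\in\mathbb Z_{\geq1}^n$ and $\mathbf b=(b_1,\ldots,b_m)\in\mathbb Z_{\geq1}^m$ with $\gcd(a_i,b_j)=1$ for all $1\leq i\leq n$ and $1\leq j\leq m$. Then the generators $\mathbf g_{i,j}$ are all minimal solutions, and the set of extreme points of $\mathrm{conv}(\mathcal H(\mathbf a,\mathbf b))$ is $\{\mathbf 0\}\cup\{\mathbf g_{i,j}:1\leq i\leq n,\ 1\leq j\leq m\}$.
   Context: A solution is a pair $(\mathbf x,\mathbf y)\in\mathbb Z_{\geq0}^n\times\mathbb Z_{\geq0}^m$ with $\sum_i x_ia_i=\sum_j y_jb_j$; it is minimal if it is nonzero and cannot be written as the sum of two nonzero solutions. $\mathcal H(\mathbf a,\mathbf b)$ is the set of minimal solutions (the Hilbert basis of the cone $\{(\mathbf x,\mathbf y)\in\mathbb R_{\geq0}^{n+m}:\mathbf a\cdot\mathbf x=\mathbf b\cdot\mathbf y\}$, which by convention here also contains $\mathbf 0$ when taking its convex hull). With $\mathbf e_k$ the $k$th standard unit vector of $\mathbb R^{n+m}$, the generator $\mathbf g_{i,j}=b_j\mathbf e_i+a_i\mathbf e_{n+j}$ is the solution with only nonzero coordinates $x_i=b_j$, $y_j=a_i$. *)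

From HB Require Import structures.
From mathcomp Require Import all_boot all_order all_algebra.
Set Implicit Arguments. Unset Strict Implicit. Unset Printing Implicit Defensive.
Import Order.TTheory GRing.Theory Num.Theory.

Section Defs.
Variables (n m : nat) (a : 'I_n -> nat) (b : 'I_m -> nat).

Definition is_solution (x : {ffun 'I_n -> nat}) (y : {ffun 'I_m -> nat}) : Prop :=
  (\sum_(i < n) x i * a i = \sum_(j < m) y j * b j)%N.

Definition nonzero_sol (x : {ffun 'I_n -> nat}) (y : {ffun 'I_m -> nat}) : Prop :=
  x != [ffun=> 0%N] \/ y != [ffun=> 0%N].

Definition minimal_solution (x : {ffun 'I_n -> nat}) (y : {ffun 'I_m -> nat}) : Prop :=
  [/\ is_solution x y, nonzero_sol x y &
   ~ (exists x1 y1 x2 y2,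
       [/\ is_solution x1 y1 /\ nonzero_sol x1 y1,
           is_solution x2 y2 /\ nonzero_sol x2 y2,
           x = [ffun i => (x1 i + x2 i)%N] & y = [ffun j => (y1 j + y2 j)%N]])].

Definition gen_x (i : 'I_n) (j : 'I_m) : {ffun 'I_n -> nat} :=
  [ffun k => if k == i then b j else 0%N].
Definition gen_y (i : 'I_n) (j : 'I_m) : {ffun 'I_m -> nat} :=
  [ffun l => if l == j then a i else 0%N].

Variable R : realFieldType.
Local Open Scope ring_scope.

Definition embed (x : {ffun 'I_n -> nat}) (y : {ffun 'I_m -> nat}) : 'rV[R]_(n + m) :=
  row_mx (\row_(i < n) (x i)%:R) (\row_(j < m) (y j)%:R).

(* H(a,b) together with 0, as a subset of R^{n+m} *)
Definition Hset (p : 'rV[R]_(n + m)) : Prop :=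
  p = 0 \/ exists x y, minimal_solution x y /\ p = embed x y.
End Defs.

Section Convex.
Variables (R : realFieldType) (N : nat).
Local Open Scope ring_scope.

Definition conv (S : 'rV[R]_N -> Prop) (p : 'rV[R]_N) : Prop :=
  exists (k : nat) (lam : 'I_k -> R) (q : 'I_k -> 'rV[R]_N),
    [/\ forall l, 0 <= lam l, \sum_(l < k) lam l = 1,
        forall l, S (q l) & p = \sum_(l < k) lam l *: q l].

Definition extreme_point (C : 'rV[R]_N -> Prop) (p : 'rV[R]_N) : Prop :=
  C p /\ forall u v (t : R), C u -> C v -> 0 < t < 1 ->
    p = t *: u + (1 - t) *: v -> u = v.
End Convex.

(* A summand (x', y') of the generator g_ij satisfies x'_i a_i = y'_j b_j with x'_i <= b_j,
   so coprimality forces x'_i to be 0 or b_j: g_ij is minimal.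

   A solution (x, y) with S = a.x > 0 decomposes as (x, y) = sum_ij (x_i y_j / S) g_ij, a
   combination of total weight |x| |y| / S.  For a minimal solution |x| |y| <= S: list x and y
   as sequences of indices with prefix weights alpha_k (k < |x|) and beta_l (l < |y|); the
   residues alpha_k - beta_l mod S are pairwise distinct, because a coincidence exhibits a block
   of x and a block or coblock of y of equal weight, which splits (x, y) into two solutions.
   Hence conv H is the convex hull of 0 and the g_ij.  Each of these points is exposed by a
   linear functional: minus the coordinate sum for 0, and for g_ij the functional with
   coefficients +-a_k on x_k and +-b_l on y_l, positive exactly at k = i and l = j, whose value
   at g_kl is a_k b_l (+-1 +-1). *)

From mathcomp Require Import all_boot all_order all_algebra.
From mathcomp Require Import zify ring lra.
Set Implicit Arguments. Unset Strict Implicit. Unset Printing Implicit Defensive.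
Import Order.TTheory GRing.Theory Num.Theory.

Section Multiplicity.
Variable I : finType.

Definition multiplicity (s : seq I) : {ffun I -> nat} := [ffun i => count_mem i s].

Definition seq_of_mult (x : {ffun I -> nat}) : seq I :=
  flatten [seq nseq (x i) i | i <- enum I].

Lemma multiplicity_seq_of_mult x : multiplicity (seq_of_mult x) = x.
Proof.
apply/ffunP => t; rewrite ffunE count_flatten sumnE !big_map -enumT big_enum /=.
rewrite (bigD1 t) //= count_nseq /= eqxx mul1n big1 ?addn0 // => i /negbTE ti.
by rewrite count_nseq /= ti.
Qed.

Lemma multiplicity_perm s1 s2 : perm_eq s1 s2 -> multiplicity s1 = multiplicity s2.
Proof. by move/permP=> eq12; apply/ffunP => t; rewrite !ffunE eq12. Qed.

Lemma multiplicity_cat s1 s2 :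
  multiplicity (s1 ++ s2) = [ffun i => multiplicity s1 i + multiplicity s2 i].
Proof. by apply/ffunP => t; rewrite !ffunE count_cat. Qed.

Lemma multiplicity_eq0 s : (multiplicity s == [ffun=> 0]) = (s == [::]).
Proof.
case: s => [|t s]; first by apply/eqP/ffunP => i; rewrite !ffunE.
by apply/negbTE/eqP => /ffunP/(_ t); rewrite !ffunE /= eqxx.
Qed.

Lemma sum_multiplicity (w : I -> nat) s :
  \sum_i multiplicity s i * w i = \sum_(t <- s) w t.
Proof.
elim: s => [|t s IHs]; first by rewrite big_nil big1 // => i _; rewrite ffunE.
rewrite big_cons -IHs (bigD1 t) //= [in RHS](bigD1 t) //= ffunE /= eqxx.
rewrite ffunE addnA mulSn; congr (_ + _); apply: eq_bigr => i /negbTE ti.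
by rewrite !ffunE /= eq_sym ti.
Qed.

Lemma sum_seq_of_mult (w : I -> nat) x :
  \sum_(t <- seq_of_mult x) w t = \sum_i x i * w i.
Proof. by rewrite -sum_multiplicity multiplicity_seq_of_mult. Qed.

Lemma size_seq_of_mult x : size (seq_of_mult x) = \sum_i x i.
Proof.
by rewrite -sum1_size sum_seq_of_mult; apply: eq_bigr => i _; rewrite muln1.
Qed.

End Multiplicity.

Lemma sum_supported1 n (x : {ffun 'I_n -> nat}) (w : 'I_n -> nat) i :
  (forall k, k != i -> x k = 0) -> \sum_k x k * w k = x i * w i.
Proof. by move=> x0; rewrite (bigD1 i) //= big1 ?addn0 // => k /x0 ->. Qed.

Lemma sum_mul_weight_gt0 k (x : {ffun 'I_k -> nat}) (w : 'I_k -> nat) :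
  (forall i, 0 < w i) -> x != [ffun=> 0] -> 0 < \sum_i x i * w i.
Proof.
move=> w_gt0 x_nz; have [i xi_nz|x0] := pickP (fun i => x i != 0).
  by rewrite (bigD1 i) //= ltn_addr // muln_gt0 lt0n xi_nz w_gt0.
by case/eqP: x_nz; apply/ffunP => i; rewrite ffunE; apply/eqP/negbFE/x0.
Qed.

Section Generators.
Variables (n m : nat) (a : 'I_n -> nat) (b : 'I_m -> nat).

Lemma solution_supported1 (x : {ffun 'I_n -> nat}) (y : {ffun 'I_m -> nat}) i j :
    (forall k, k != i -> x k = 0) -> (forall l, l != j -> y l = 0) ->
  is_solution a b x y <-> x i * a i = y j * b j.
Proof. by move=> x0 y0; rewrite /is_solution !(sum_supported1 _ x0, sum_supported1 _ y0). Qed.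

Lemma solution_supported1_trivial (x : {ffun 'I_n -> nat}) (y : {ffun 'I_m -> nat}) i j :
    (forall k, k != i -> x k = 0) -> (forall l, l != j -> y l = 0) ->
  0 < b j -> is_solution a b x y -> x i = 0 -> ~ nonzero_sol x y.
Proof.
move=> x0 y0 bj_gt0 /(solution_supported1 x0 y0) sol xi0.
have yj0 : y j = 0 by move: sol; rewrite xi0 mul0n; nia.
have -> : x = [ffun=> 0] by apply/ffunP => k; rewrite ffunE; case: (eqVneq k i) => [->|/x0].
have -> : y = [ffun=> 0] by apply/ffunP => l; rewrite ffunE; case: (eqVneq l j) => [->|/y0].
by rewrite /nonzero_sol !eqxx => -[].
Qed.

Lemma gen_minimal i j : 0 < b j -> coprime (a i) (b j) ->
  minimal_solution a b (gen_x b i j) (gen_y a i j).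
Proof.
move=> bj_gt0 co_ij.
have genx0 k : k != i -> gen_x b i j k = 0 by rewrite ffunE => /negbTE ->.
have geny0 l : l != j -> gen_y a i j l = 0 by rewrite ffunE => /negbTE ->.
split.
- by apply/(solution_supported1 genx0 geny0); rewrite !ffunE !eqxx mulnC.
- by left; apply/eqP => /ffunP/(_ i); rewrite !ffunE eqxx; lia.
case=> x1 [y1 [x2 [y2 [[sol1 nz1] [sol2 nz2] ex ey]]]].
have {}ex k : gen_x b i j k = x1 k + x2 k by rewrite ex ffunE.
have {}ey l : gen_y a i j l = y1 l + y2 l by rewrite ey ffunE.
have x1_0 k : k != i -> x1 k = 0 by move/genx0; rewrite ex; lia.
have x2_0 k : k != i -> x2 k = 0 by move/genx0; rewrite ex; lia.
have y1_0 l : l != j -> y1 l = 0 by move/geny0; rewrite ey; lia.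
have y2_0 l : l != j -> y2 l = 0 by move/geny0; rewrite ey; lia.
have x12i : x1 i + x2 i = b j by rewrite -ex ffunE eqxx.
have /dvdnP [[|c] x1i] : b j %| x1 i.
  rewrite coprime_sym in co_ij; rewrite -(Gauss_dvdl _ co_ij).
  by rewrite (solution_supported1 x1_0 y1_0) in sol1; rewrite sol1 dvdn_mull.
- exact: solution_supported1_trivial x1_0 y1_0 bj_gt0 sol1 x1i nz1.
- by apply: solution_supported1_trivial x2_0 y2_0 bj_gt0 sol2 _ nz2; move: x12i; rewrite x1i; nia.
Qed.

End Generators.

Section Segments.
Variable T : eqType.
Implicit Types (u : seq T) (w : T -> nat).

Definition segment u k k' := drop k (take k' u).
Definition cosegment u k k' := take k u ++ drop k' u.

Lemma perm_segment u k k' : k <= k' -> perm_eq u (segment u k k' ++ cosegment u k k').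
Proof.
move=> le_kk'; rewrite perm_sym perm_catCA catA -(take_takel u le_kk').
by rewrite !cat_take_drop.
Qed.

Lemma segment_eq_nil u k k' : k' <= size u -> (segment u k k' == [::]) = (k' <= k).
Proof. by move=> le_k'u; rewrite -size_eq0 size_drop size_takel //; lia. Qed.

Lemma cosegment_eq_nil u k k' : k <= k' -> k' <= size u ->
  (cosegment u k k' == [::]) = (k == 0) && (size u <= k').
Proof.
by move=> le_kk' le_k'u; rewrite -size_eq0 size_cat size_takel ?size_drop; lia.
Qed.

Lemma sum_take_segment w u k k' : k <= k' ->
  \sum_(t <- take k' u) w t = \sum_(t <- take k u) w t + \sum_(t <- segment u k k') w t.
Proof. by move=> le_kk'; rewrite -{1}(cat_take_drop k (take k' u)) take_takel // big_cat. Qed.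

Lemma sum_segment_cosegment w u k k' : k <= k' ->
  \sum_(t <- segment u k k') w t + \sum_(t <- cosegment u k k') w t = \sum_(t <- u) w t.
Proof. by move=> le_kk'; rewrite -big_cat; apply: perm_big; rewrite perm_sym perm_segment. Qed.

Lemma sum_take_lt w u k : (forall t, 0 < w t) -> k < size u ->
  \sum_(t <- take k u) w t < \sum_(t <- u) w t.
Proof.
move=> w_pos lt_ku; rewrite -[in X in _ < X](cat_take_drop k u) big_cat /= -addn1 leq_add2l.
by case: (drop k u) (size_drop k u) => [|t u'] /=; [lia | rewrite big_cons => _; apply: ltn_addr].
Qed.

End Segments.

Lemma minimal_solution_split n m (a : 'I_n -> nat) (b : 'I_m -> nat)
    (A1 A2 : seq 'I_n) (B1 B2 : seq 'I_m) :
  minimal_solution a b (multiplicity (A1 ++ A2)) (multiplicity (B1 ++ B2)) ->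
  \sum_(i <- A1) a i = \sum_(j <- B1) b j ->
  (A1 == [::]) && (B1 == [::]) || (A2 == [::]) && (B2 == [::]).
Proof.
case=> sol _ no_split eq1; apply/norP => -[/nandP nz1 /nandP nz2]; apply: no_split.
exists (multiplicity A1), (multiplicity B1), (multiplicity A2), (multiplicity B2).
rewrite /is_solution /nonzero_sol !multiplicity_eq0 !sum_multiplicity !multiplicity_cat.
split=> //; split=> //.
by move: sol; rewrite /is_solution !sum_multiplicity !big_cat /= eq1 => /addnI.
Qed.

Section ProductBound.
Variables (n m : nat) (a : 'I_n -> nat) (b : 'I_m -> nat).
Variables (x : {ffun 'I_n -> nat}) (y : {ffun 'I_m -> nat}).
Hypotheses (a_pos : forall i, 0 < a i) (b_pos : forall j, 0 < b j).
Hypothesis xy_min : minimal_solution a b x y.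

Local Notation sA := (seq_of_mult x).
Local Notation sB := (seq_of_mult y).
Local Notation S := (\sum_i x i * a i).
Local Notation wA u := (\sum_(i <- u) a i).
Local Notation wB u := (\sum_(j <- u) b j).
Local Notation alpha k := (wA (take k sA)).
Local Notation beta l := (wB (take l sB)).

Let wA_sA : wA sA = S.
Proof. exact: sum_seq_of_mult. Qed.

Let wB_sB : wB sB = S.
Proof. by rewrite sum_seq_of_mult; case: xy_min. Qed.

Let split_sA_sB A1 A2 B1 B2 : perm_eq sA (A1 ++ A2) -> perm_eq sB (B1 ++ B2) ->
  wA A1 = wB B1 -> (A1 == [::]) && (B1 == [::]) || (A2 == [::]) && (B2 == [::]).
Proof.
move=> /multiplicity_perm eqA /multiplicity_perm eqB; apply: minimal_solution_split.
by rewrite -eqA -eqB !multiplicity_seq_of_mult.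
Qed.

Let alpha_lt k : k < size sA -> alpha k < S.
Proof. by rewrite -wA_sA; apply: sum_take_lt. Qed.

Let beta_lt l : l < size sB -> beta l < S.
Proof. by rewrite -wB_sB; apply: sum_take_lt. Qed.

(* (alpha k - beta l) mod S, for alpha k, beta l < S *)
Let residue k l := if beta l <= alpha k then alpha k - beta l else alpha k + S - beta l.

Let residue_inj k l k' l' : k < size sA -> k' < size sA -> l < size sB -> l' < size sB ->
  residue k l = residue k' l' -> k = k' /\ l = l'.
Proof.
wlog le_kk' : k l k' l' / k <= k'.
  move=> wlog_le kA k'A lB l'B eq_res; case: (leqP k k') => [|/ltnW] le; first exact: wlog_le.
  by have [-> ->] := wlog_le k' l' k l le k'A kA l'B lB (esym eq_res).
move=> kA k'A lB l'B eq_res.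
have lt_k := alpha_lt kA; have lt_k' := alpha_lt k'A.
have lt_l := beta_lt lB; have lt_l' := beta_lt l'B.
have {eq_res} congr_mod_S : alpha k + beta l' = alpha k' + beta l \/
    alpha k + beta l' + S = alpha k' + beta l \/ alpha k + beta l' = alpha k' + beta l + S.
  by move: eq_res; rewrite /residue; do 2!case: ifPn; lia.
have alpha_k' : alpha k' = alpha k + wA (segment sA k k') by exact: sum_take_segment.
have permA := perm_segment sA le_kk'.
have segA := segment_eq_nil (u := sA) k (ltnW k'A).
have cosegA : cosegment sA k k' == [::] = false.
  by rewrite cosegment_eq_nil ?(ltnW k'A) // leqNgt k'A andbF.
case: (leqP l l') => [le_ll'|lt_l'l].
- have beta_l' : beta l' = beta l + wB (segment sB l l') by exact: sum_take_segment.
  have /(split_sA_sB permA (perm_segment sB le_ll')) : wA (segment sA k k') = wB (segment sB l l').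
    by lia.
  by rewrite segA cosegA /= orbF (segment_eq_nil l (ltnW l'B)); lia.
- have le_l'l := ltnW lt_l'l; have permB := perm_segment sB le_l'l.
  have beta_l : beta l = beta l' + wB (segment sB l' l) by exact: sum_take_segment.
  have sumB : wB (segment sB l' l) + wB (cosegment sB l' l) = S.
    by rewrite -wB_sB; exact: sum_segment_cosegment.
  have permB' : perm_eq sB (cosegment sB l' l ++ segment sB l' l).
    by rewrite perm_sym perm_catC perm_sym.
  have [/(split_sA_sB permA permB)|/(split_sA_sB permA permB')] :
      wA (segment sA k k') = wB (segment sB l' l) \/
      wA (segment sA k k') = wB (cosegment sB l' l) by lia.
  + by rewrite segA cosegA /= orbF (segment_eq_nil l' (ltnW lB)); lia.
  + have cosegB : cosegment sB l' l == [::] = false.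
      by rewrite cosegment_eq_nil ?(ltnW lB) // leqNgt lB andbF.
    by rewrite cosegA cosegB andbF.
Qed.

Lemma minimal_solution_sum_mul_le : (\sum_i x i) * (\sum_j y j) <= S.
Proof.
have residue_lt (kl : 'I_(size sA) * 'I_(size sB)) : residue kl.1 kl.2 < S.
  have := alpha_lt (ltn_ord kl.1); have := beta_lt (ltn_ord kl.2).
  by rewrite /residue; case: ifPn; lia.
have residue_ord_inj : injective (fun kl => Ordinal (residue_lt kl)).
  move=> [k l] [k' l'] /(congr1 val) /= /residue_inj[] // eq_k eq_l.
  by congr pair; apply: val_inj.
have := leq_card _ residue_ord_inj.
by rewrite card_prod !card_ord !size_seq_of_mult.
Qed.

End ProductBound.

Local Open Scope ring_scope.

Section Convexity.
Variables (R : realFieldType) (N : nat).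
Implicit Types (S T : 'rV[R]_N -> Prop) (p u v w : 'rV[R]_N).

Lemma conv_mem S p : S p -> conv S p.
Proof.
move=> Sp; exists 1%N, (fun=> 1), (fun=> p).
by split=> //; rewrite big_ord1 ?scale1r.
Qed.

Lemma conv_fintype S (I : finType) (lam : I -> R) (q : I -> 'rV[R]_N) :
    (forall i, 0 <= lam i) -> \sum_i lam i = 1 -> (forall i, S (q i)) ->
  conv S (\sum_i lam i *: q i).
Proof.
move=> lam_ge0 lam_sum1 Sq; exists #|I|, (fun l => lam (enum_val l)), (fun l => q (enum_val l)).
split=> //.
- by rewrite -lam_sum1 -(big_enum_val lam); apply: eq_bigl => i; rewrite inE.
- by rewrite -(big_enum_val (fun i => lam i *: q i)); apply: eq_bigl => i; rewrite inE.
Qed.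

Lemma extreme_conv_comb S (I : finType) (lam : I -> R) (q : I -> 'rV[R]_N) p :
    extreme_point (conv S) p ->
    (forall i, 0 <= lam i) -> \sum_i lam i = 1 -> (forall i, S (q i)) ->
  p = \sum_i lam i *: q i -> exists i, p = q i.
Proof.
move=> [_ p_ext] lam_ge0 lam_sum1 Sq p_comb.
have [i0 lam_i0_gt0|lam_le0] := pickP (fun i => 0 < lam i); last first.
  suff : \sum_i lam i = 0 by rewrite lam_sum1 => /eqP; rewrite oner_eq0.
  by apply: big1 => i _; apply/eqP; rewrite eq_le lam_ge0 andbT leNgt lam_le0.
exists i0; set t := lam i0 in lam_i0_gt0.
have rest_sum : \sum_(i | i != i0) lam i = 1 - t.
  by rewrite -lam_sum1 [in RHS](bigD1 i0) //= addrAC subrr add0r.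
have p_split : p = t *: q i0 + \sum_(i | i != i0) lam i *: q i by rewrite p_comb (bigD1 i0).
have [t1|t_neq1] := eqVneq t 1.
  have lam0 : forall i, i != i0 -> lam i = 0.
    by apply: psumr_eq0P => [i _|]; rewrite ?lam_ge0 // rest_sum t1 subrr.
  by rewrite p_split t1 scale1r big1 ?addr0 // => i /lam0 ->; rewrite scale0r.
have t_lt1 : t < 1 by rewrite lt_neqAle t_neq1 /= -lam_sum1 (bigD1 i0) //= lerDl sumr_ge0.
have rest_neq0 : 1 - t != 0 by rewrite subr_eq0 eq_sym.
pose mu i := if i == i0 then 0 else lam i / (1 - t).
have conv_rest : conv S (\sum_i mu i *: q i).
  apply: conv_fintype => // [i|].
    by rewrite /mu; case: eqP => // _; rewrite divr_ge0 ?lam_ge0 // subr_ge0 ltW.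
  rewrite (bigD1 i0) //= /mu eqxx add0r -[RHS](mulfV rest_neq0) -rest_sum mulr_suml.
  by apply: eq_bigr => i /negbTE ->.
have p_seg : p = t *: q i0 + (1 - t) *: \sum_i mu i *: q i.
  rewrite p_split scaler_sumr [in RHS](bigD1 i0) //= /mu eqxx scale0r scaler0 add0r.
  by congr (_ + _); apply: eq_bigr => i /negbTE ->; rewrite scalerA mulrC divfK.
have eq_q := p_ext _ _ _ (conv_mem (Sq i0)) conv_rest (introT andP (conj lam_i0_gt0 t_lt1)) p_seg.
by rewrite p_seg -eq_q -scalerDl addrC subrK scale1r.
Qed.

Lemma extreme_conv_subset S T p : (forall q, T q -> S q) -> (forall q, S q -> conv T q) ->
  extreme_point (conv S) p -> T p.
Proof.
move=> sub_TS sub_S_convT p_ext; have [[k [lam [q [lam_ge0 lam_sum1 Sq p_comb]]]] _] := p_ext.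
have [l p_ql] := extreme_conv_comb p_ext lam_ge0 lam_sum1 Sq p_comb.
have [k' [lam' [q' [lam'_ge0 lam'_sum1 Tq' p_comb']]]] : conv T p.
  by rewrite p_ql; apply/sub_S_convT/Sq.
have [l' ->] := extreme_conv_comb p_ext lam'_ge0 lam'_sum1 (fun l => sub_TS _ (Tq' l)) p_comb'.
exact: Tq'.
Qed.

Definition dot w u : R := \sum_k w 0 k * u 0 k.

Lemma dotDr w u v : dot w (u + v) = dot w u + dot w v.
Proof. by rewrite /dot -big_split; apply: eq_bigr => k _; rewrite mxE mulrDr. Qed.

Lemma dotZr w c u : dot w (c *: u) = c * dot w u.
Proof. by rewrite /dot mulr_sumr; apply: eq_bigr => k _; rewrite mxE mulrCA. Qed.

Lemma dot0r w : dot w 0 = 0.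
Proof. by rewrite -(scale0r 0) dotZr mul0r. Qed.

Lemma dot_comb w (I : finType) (lam : I -> R) (q : I -> 'rV[R]_N) :
  dot w (\sum_i lam i *: q i) = \sum_i lam i * dot w (q i).
Proof. by rewrite (big_morph _ (dotDr w) (dot0r w)); apply: eq_bigr => i _; rewrite dotZr. Qed.

Lemma conv_dot_le S w p u : (forall s, S s -> dot w s <= dot w p) ->
  conv S u -> dot w u <= dot w p.
Proof.
move=> le_p [k [lam [q [lam_ge0 lam_sum1 Sq ->]]]].
rewrite dot_comb -[X in _ <= X]mul1r -lam_sum1 mulr_suml.
by apply: ler_sum => l _; rewrite ler_wpM2l ?le_p.
Qed.

Lemma exposed_extreme_conv S w p :
    S p -> (forall s, S s -> dot w s <= dot w p /\ (dot w s = dot w p -> s = p)) ->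
  extreme_point (conv S) p.
Proof.
move=> Sp exposed.
have conv_le u : conv S u -> dot w u <= dot w p.
  by apply: conv_dot_le => s /exposed[].
have conv_eq u : conv S u -> dot w u = dot w p -> u = p.
  move=> [k [lam [q [lam_ge0 lam_sum1 Sq ->]]]]; rewrite dot_comb => eq_p.
  have gap0 : \sum_l lam l * (dot w p - dot w (q l)) = 0.
    under eq_bigr do rewrite mulrBr.
    by rewrite sumrB -mulr_suml lam_sum1 mul1r eq_p subrr.
  have gap_ge0 l : 0 <= lam l * (dot w p - dot w (q l)).
    by rewrite mulr_ge0 ?subr_ge0 ?(exposed _ (Sq l)).1.
  rewrite -[RHS]scale1r -lam_sum1 scaler_suml; apply: eq_bigr => l _.
  have /eqP := psumr_eq0P (fun l _ => gap_ge0 l) gap0 (i := l) isT.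
  rewrite mulf_eq0 subr_eq0 => /orP[/eqP -> | /eqP eq_ql]; first by rewrite !scale0r.
  by rewrite ((exposed _ (Sq l)).2 (esym eq_ql)).
split; first exact: conv_mem.
move=> u v t Su Sv /andP[t_gt0 t_lt1] p_seg.
have dot_seg : dot w p = t * dot w u + (1 - t) * dot w v by rewrite {1}p_seg dotDr !dotZr.
have le_u := conv_le u Su; have le_v := conv_le v Sv.
have eq_u : dot w u = dot w p.
  by apply/eqP; rewrite eq_le le_u leNgt; apply/negP => lt_u; nra.
have eq_v : dot w v = dot w p.
  by apply/eqP; rewrite eq_le le_v leNgt; apply/negP => lt_v; nra.
by rewrite (conv_eq u Su eq_u) (conv_eq v Sv eq_v).
Qed.

Definition subconv (I : finType) (g : I -> 'rV[R]_N) p : Prop :=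
  exists lam : I -> R, [/\ forall i, 0 <= lam i, \sum_i lam i <= 1 & p = \sum_i lam i *: g i].

Lemma subconv_conv (I : finType) (g : I -> 'rV[R]_N) p :
  subconv g p -> conv (fun q => q = 0 \/ exists i, q = g i) p.
Proof.
case=> lam [lam_ge0 lam_le1 ->].
pose mu (o : 'I_1 + I) := if o is inr i then lam i else 1 - \sum_i lam i.
pose q (o : 'I_1 + I) := if o is inr i then g i else 0.
have -> : \sum_i lam i *: g i = \sum_o mu o *: q o.
  by rewrite big_sumType /= big_ord1 scaler0 add0r.
apply: conv_fintype => [[_|i]|| [_|i]] /=; rewrite ?subr_ge0 //.
- by rewrite big_sumType /= big_ord1 subrK.
- by left.
- by right; exists i.
Qed.

Lemma subconv_dot_lt0 (I : finType) (g : I -> 'rV[R]_N) w p :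
    (forall i, dot w (g i) < 0) -> subconv g p ->
  dot w p <= 0 /\ (dot w p = 0 -> p = 0).
Proof.
move=> g_lt0 [lam [lam_ge0 _ ->]]; rewrite dot_comb.
have term_le0 i : lam i * dot w (g i) <= 0 by rewrite mulr_ge0_le0 // ltW.
split=> [|sum0]; first exact: sumr_le0.
have lam0 i : lam i = 0.
  have term_ge0 j : 0 <= - (lam j * dot w (g j)) by rewrite oppr_ge0.
  have neg_sum0 : \sum_j - (lam j * dot w (g j)) = 0 by rewrite sumrN sum0 oppr0.
  have /eqP := psumr_eq0P (fun j _ => term_ge0 j) neg_sum0 (i := i) isT.
  by rewrite oppr_eq0 mulf_eq0 (lt_eqF (g_lt0 i)) orbF => /eqP.
by apply: big1 => i _; rewrite lam0 scale0r.
Qed.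

Lemma subconv_dot_max (I : finType) (g : I -> 'rV[R]_N) w i0 p :
    (forall i, i != i0 -> dot w (g i) <= 0) -> 0 < dot w (g i0) -> subconv g p ->
  dot w p <= dot w (g i0) /\ (dot w p = dot w (g i0) -> p = g i0).
Proof.
move=> g_le0 g_i0_gt0 [lam [lam_ge0 lam_le1 ->]]; rewrite dot_comb (bigD1 i0) //=.
rewrite (bigD1 i0) //= in lam_le1.
have rest_le0 : \sum_(i | i != i0) lam i * dot w (g i) <= 0.
  by apply: sumr_le0 => i /g_le0; apply: mulr_ge0_le0.
have rest_ge0 : 0 <= \sum_(i | i != i0) lam i by apply: sumr_ge0.
have lam_i0_ge0 := lam_ge0 i0.
split=> [|eq_max]; first nra.
have lam_i0 : lam i0 = 1 by nra.
have lam0 : forall i, i != i0 -> lam i = 0.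
  by apply: psumr_eq0P => [i _|]; [exact: lam_ge0 | lra].
by rewrite (bigD1 i0) //= lam_i0 scale1r big1 ?addr0 // => i /lam0 ->; rewrite scale0r.
Qed.

End Convexity.

Section SolutionGeometry.
Variables (R : realFieldType) (n m : nat) (a : 'I_n -> nat) (b : 'I_m -> nat).
Implicit Types (x : {ffun 'I_n -> nat}) (y : {ffun 'I_m -> nat}) (w : 'rV[R]_(n + m)).

Local Notation G t := (embed R (gen_x b t.1 t.2) (gen_y a t.1 t.2)).

Lemma embed_lshift x y k : embed R x y 0 (lshift m k) = (x k)%:R.
Proof. by rewrite row_mxEl mxE. Qed.

Lemma embed_rshift x y l : embed R x y 0 (rshift n l) = (y l)%:R.
Proof. by rewrite row_mxEr mxE. Qed.

Lemma gen_lshift t k : G t 0 (lshift m k) = (k == t.1)%:R * (b t.2)%:R.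
Proof. by rewrite embed_lshift ffunE; case: eqP; rewrite ?mul1r ?mul0r. Qed.

Lemma gen_rshift t l : G t 0 (rshift n l) = (l == t.2)%:R * (a t.1)%:R.
Proof. by rewrite embed_rshift ffunE; case: eqP; rewrite ?mul1r ?mul0r. Qed.

Lemma embed_solution_decomp x y : is_solution a b x y -> (0 < \sum_i x i * a i)%N ->
  embed R x y = \sum_t ((x t.1)%:R * (y t.2)%:R / (\sum_i x i * a i)%:R) *: G t.
Proof.
rewrite /is_solution; set S := (\sum_i x i * a i)%N => sol S_gt0.
have S_neq0 : (S%:R : R) != 0 by rewrite pnatr_eq0 -lt0n.
apply/rowP => c; rewrite summxE; under eq_bigr do rewrite mxE.
case: (split_ordP c) => [k ->|l ->].
- under eq_bigr do rewrite gen_lshift.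
  rewrite embed_lshift -(pair_bigA _ (fun i j =>
    (x i)%:R * (y j)%:R / S%:R * ((k == i)%:R * (b j)%:R))) /=.
  rewrite (bigD1 k) //= [X in _ + X]big1 ?addr0 => [|i /negbTE ne_ik]; last first.
    by apply: big1 => j _; rewrite eq_sym ne_ik mul0r mulr0.
  transitivity ((x k)%:R * (\sum_j y j * b j)%:R / S%:R : R); first by rewrite -sol mulfK.
  rewrite natr_sum mulr_sumr mulr_suml.
  by apply: eq_bigr => j _; rewrite eqxx mul1r natrM; ring.
- under eq_bigr do rewrite gen_rshift.
  rewrite embed_rshift -(pair_bigA _ (fun i j =>
    (x i)%:R * (y j)%:R / S%:R * ((l == j)%:R * (a i)%:R))) /=.
  rewrite -[LHS](mulfK S_neq0) natr_sum mulr_sumr mulr_suml.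
  apply: eq_bigr => i _.
  rewrite (bigD1 l) //= [X in _ + X]big1 ?addr0 => [|j /negbTE ne_lj]; last first.
    by rewrite eq_sym ne_lj mul0r mulr0.
  by rewrite eqxx mul1r natrM; ring.
Qed.

Lemma dot_gen w t :
  dot w (G t) = w 0 (lshift m t.1) * (b t.2)%:R + w 0 (rshift n t.2) * (a t.1)%:R.
Proof.
rewrite /dot big_split_ord /=; congr (_ + _).
- rewrite (bigD1 t.1) //= gen_lshift eqxx mul1r big1 ?addr0 // => k /negbTE ne_k.
  by rewrite gen_lshift ne_k mul0r mulr0.
- rewrite (bigD1 t.2) //= gen_rshift eqxx mul1r big1 ?addr0 // => l /negbTE ne_l.
  by rewrite gen_rshift ne_l mul0r mulr0.
Qed.

Hypotheses (a_pos : forall i, (0 < a i)%N) (b_pos : forall j, (0 < b j)%N).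

Lemma Hset_subconv s : Hset a b s -> subconv (fun t => G t) s.
Proof.
case=> [->|[x [y [xy_min ->]]]].
  exists (fun=> 0); split=> //; first by rewrite big1 ?ler01.
  by rewrite big1 // => t _; rewrite scale0r.
have [sol nz _] := xy_min.
have S_gt0 : (0 < \sum_i x i * a i)%N.
  by case: nz => [/sum_mul_weight_gt0 -> //|/sum_mul_weight_gt0]; rewrite sol; apply.
set S := (\sum_i x i * a i)%N in S_gt0 *.
exists (fun t => (x t.1)%:R * (y t.2)%:R / S%:R); split.
- by move=> t; rewrite divr_ge0 ?mulr_ge0.
- rewrite -(pair_bigA _ (fun i j => (x i)%:R * (y j)%:R / S%:R)) /=.
  have -> : \sum_i \sum_j ((x i)%:R * (y j)%:R / S%:R : R) =
            ((\sum_i x i) * (\sum_j y j))%:R / S%:R.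
    rewrite natrM !natr_sum !mulr_suml; apply: eq_bigr => i _.
    by rewrite mulr_sumr mulr_suml.
  by rewrite ler_pdivrMr ?ltr0n // mul1r ler_nat (minimal_solution_sum_mul_le a_pos b_pos xy_min).
- exact: embed_solution_decomp.
Qed.

Hypothesis cop : forall i j, coprime (a i) (b j).

Local Notation H := (Hset a b (R := R)).

Lemma gen_Hset t : H (G t).
Proof.
right; exists (gen_x b t.1 t.2), (gen_y a t.1 t.2).
by split=> //; exact: gen_minimal (b_pos _) (cop _ _).
Qed.

Lemma extreme_Hset_gen p : extreme_point (conv H) p -> p = 0 \/ exists t, p = G t.
Proof.
apply: (extreme_conv_subset (T := fun q => q = 0 \/ exists t, q = G t)).
- by move=> q [->|[t ->]]; [left | exact: gen_Hset].
- by move=> q /Hset_subconv /subconv_conv.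
Qed.

Lemma zero_extreme_Hset : extreme_point (conv H) 0.
Proof.
apply: (exposed_extreme_conv (w := const_mx (-1))) => [|s /Hset_subconv]; first by left.
rewrite dot0r; apply: subconv_dot_lt0 => t.
by rewrite dot_gen !mxE !mulN1r -opprD oppr_lt0 addr_gt0 ?ltr0n.
Qed.

Lemma gen_extreme_Hset i j : extreme_point (conv H) (G (i, j)).
Proof.
pose pm (c : bool) : R := if c then 1 else -1.
pose w := row_mx (\row_k ((a k)%:R * pm (k == i))) (\row_l ((b l)%:R * pm (l == j))).
have dot_w t : dot w (G t) = (a t.1 * b t.2)%:R * (pm (t.1 == i) + pm (t.2 == j)).
  by rewrite dot_gen row_mxEl row_mxEr !mxE natrM; ring.
apply: (exposed_extreme_conv (w := w) (gen_Hset (i, j))) => s /Hset_subconv.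
apply: subconv_dot_max => [[k l] ne_kl|]; rewrite dot_w; last first.
  by rewrite /pm /= !eqxx; apply: mulr_gt0; rewrite ?ltr0n ?muln_gt0 ?a_pos ?b_pos ?addr_gt0.
rewrite mulr_ge0_le0 // /pm /=; move: ne_kl; rewrite xpair_eqE.
by case: (k == i); case: (l == j) => //= _; lra.
Qed.

End SolutionGeometry.

Theorem corollary3 (R : realFieldType) (n m : nat) (a : 'I_n -> nat) (b : 'I_m -> nat)
  (a_pos : forall i, (0 < a i)%N) (b_pos : forall j, (0 < b j)%N)
  (cop : forall i j, coprime (a i) (b j)) :
  (forall i j, minimal_solution a b (gen_x b i j) (gen_y a i j)) /\
  (forall p : 'rV[R]_(n + m),
     extreme_point (conv (Hset a b (R:=R))) p <->
     (p = 0 \/ exists i j, p = embed R (gen_x b i j) (gen_y a i j))).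
Proof.
split=> [i j|p]; first exact: gen_minimal.
split=> [/(extreme_Hset_gen a_pos b_pos cop)[->|[t ->]]|[->|[i [j ->]]]].
- by left.
- by right; exists t.1, t.2.
- exact: zero_extreme_Hset.
- exact: gen_extreme_Hset.
Qed.
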